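(* Let $P$ be the Petersen graph and $\mathcal{N}P$ its normal graph algebra over a field $\mathbb{F}$ of characteristic not $2$. The one-dimensional subspaces $\langle u\rangle$ of $U_P$ with $\mathrm{wt}(u^2)=3$ are exactly fifteen: the spans of the ten vertices $\mathbf{ij}$, and the spans of the five elements $u_1,\dots,u_5$, where $u_i=\frac12\left(\sum_{\mathbf{i}\notin \mathbf{A}}\mathbf{A}-\sum_{\mathbf{i}\in\mathbf{A}}\mathbf{A}\right)$, the sums over vertices $\mathbf{A}$ (2-subsets of $\{1,\dots,5\}$) not containing, respectively containing, $i$. The five $u_i$ form an orbit under the action of $\mathrm{Sym}(5)$.
   Context: The Petersen graph $P$ has as vertices the ten 2-element subsets $\mathbf{ij}=\{i,j\}$ of $\{1,2,3,4,5\}$, with $\mathbf{ij}$ adjacent to $\mathbf{kl}$ iff $\{i,j\}\cap\{k,l\}=\emptyset$; the edge joining them is written $\mathbf{ijkl}$. $\mathrm{Sym}(5)$ acts by permuting indices. $\mathcal{N}P=U_P\oplus\mathfrak{Z}_P$ with $U_P$ having basis the vertices and $\mathfrak{Z}_P$ basis the edges, commutative bilinear product determined by: for distinct vertices $x,y$, $xy$ equals the edge joining them if adjacent and $0$ otherwise; $x^2$ is the sum of the three edges at $x$; products involving $\mathfrak{Z}_P$ are $0$. For $\mathfrak{z}\in\mathfrak{Z}_P$, $\mathrm{wt}(\mathfrak{z})$ is the number of edges having nonzero coefficient in $\mathfrak{z}$. *)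

From HB Require Import structures.
From mathcomp Require Import all_boot all_order all_fingroup all_algebra.
Set Implicit Arguments. Unset Strict Implicit. Unset Printing Implicit Defensive.
Import Order.TTheory GRing.Theory Num.Theory.
Local Open Scope ring_scope.

(* Indices {1,...,5} are represented by 'I_5 = {0,...,4}. *)
Definition pvert := {A : {set 'I_5} | #|A| == 2%N}.
HB.instance Definition _ := Finite.on pvert.

Definition padj (a b : pvert) : bool := [disjoint val a & val b].

Definition is_pedge (E : {set pvert}) : bool :=
  [exists a : pvert, exists b : pvert, (E == [set a; b]) && padj a b].
Definition pedge := {E : {set pvert} | is_pedge E}.
HB.instance Definition _ := Finite.on pedge.

Notation UP F := {ffun pvert -> F}.
Notation ZP F := {ffun pedge -> F}.

Definition vtx (F : fieldType) (x : pvert) : UP F := [ffun y => (y == x)%:R].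

(* product of two basis vertices, an element of Z_P:
   x*x = sum of the edges at x; x*y = edge xy if adjacent, 0 otherwise *)
Definition bprod (F : fieldType) (a b : pvert) : ZP F :=
  [ffun e : pedge => if a == b then (a \in val e)%:R
                     else (val e == [set a; b])%:R].

Definition NPmul (F : fieldType) (u v : UP F) : ZP F :=
  [ffun e : pedge => \sum_(a : pvert) \sum_(b : pvert) u a * v b * bprod F a b e].

Definition wt (F : fieldType) (z : ZP F) : nat := #|[set e | z e != 0]|.

Definition u_el (F : fieldType) (i : 'I_5) : UP F :=
  [ffun A : pvert => if i \in val A then - (2%:R)^-1 else (2%:R)^-1].

Definition permv (s : {perm 'I_5}) (A : pvert) : pvert :=
  insubd A (s @: val A).
(* sigma . (sum_A c_A A) = sum_A c_A sigma(A) *)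
Definition actU (F : fieldType) (s : {perm 'I_5}) (u : UP F) : UP F :=
  [ffun A => u (permv s^-1 A)].

Definition scU (F : fieldType) (c : F) (u : UP F) : UP F := [ffun A => c * u A].

(* The coefficient of the edge xy in u^2 is (u_x + u_y)^2, so wt(u^2) is the
   number of edges xy with u_x + u_y <> 0.  If these are the three edges of S,
   then u_y = -u_x along the twelve other edges: signs propagate through each
   component of P - S, and u vanishes on every vertex reached from itself
   with the opposite sign (an odd closed walk; here 2 <> 0 is used).
   Running this propagation for each of the 455 triples S shows that either
   some edge of S is forced to have u_x + u_y = 0, or u is proportional to a
   vertex or to some u_i.  Conversely the square of a vertex is its star and
   u_i^2 is the sum of the three edges among the six vertices avoiding i. *)

From HB Require Import structures.
From mathcomp Require Import all_boot all_order all_fingroup all_algebra.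
From mathcomp Require Import ring zify.

Set Implicit Arguments.
Unset Strict Implicit.
Unset Printing Implicit Defensive.

Import GRing.Theory.
Local Open Scope ring_scope.

Fixpoint subseqs_of_size {T : Type} (k : nat) (s : seq T) : seq (seq T) :=
  match k, s with
  | 0, _ => [:: [::]]
  | k'.+1, [::] => [::]
  | k'.+1, x :: s' =>
      map (cons x) (subseqs_of_size k' s') ++ subseqs_of_size k'.+1 s'
  end.

Lemma mem_subseqs_of_size {T : eqType} (k : nat) (s t : seq T) :
  subseq t s -> size t = k -> t \in subseqs_of_size k s.
Proof.
elim: s t k => [|x s IH] t [|k]; try by move=> _ /size0nil ->; rewrite mem_seq1.
  by rewrite subseq0 => /eqP ->.
case: t => [|y t] //= sub_yt [size_t]; rewrite mem_cat.
move: sub_yt; case: eqP => [-> sub_t | _ sub_yt].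
  by rewrite (map_f _ (IH t k sub_t size_t)).
by rewrite IH ?orbT //= size_t.
Qed.

Lemma card_set_count {T : finType} {A : eqType} (f : A -> T) (s : seq A)
    (P : pred T) :
  uniq s -> {in s &, injective f} -> (forall t, exists2 a, a \in s & t = f a) ->
  #|[set t | P t]| = count (fun a => P (f a)) s.
Proof.
move=> s_uniq f_inj f_onto.
have im : [set t | P t] =i [seq f a | a <- s & P (f a)].
  move=> t; rewrite inE; apply/idP/mapP => [Pt | [a]].
    by have [a sa def_t] := f_onto t; exists a; rewrite // mem_filter -def_t Pt.
  by rewrite mem_filter => /andP[Pfa _] ->.
have im_uniq : uniq [seq f a | a <- s & P (f a)].
  rewrite map_inj_in_uniq ?filter_uniq //.
  by apply: sub_in2 f_inj => a; rewrite mem_filter => /andP[].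
by move/card_uniqP: im_uniq; rewrite -(eq_card im) size_map size_filter.
Qed.

Lemma disjoint_set2 {T : finType} (a b : T) (B : {set T}) :
  [disjoint [set a; b] & B] = (a \notin B) && (b \notin B).
Proof. by rewrite disjoints_subset subUset !sub1set !inE. Qed.

Lemma fixed_oppr_eq0 {F : fieldType} (x : F) : 2%:R != 0 :> F -> x = - x -> x = 0.
Proof.
move=> two x_opp; apply/eqP.
have : x * 2%:R == 0 by rewrite mulr_natr mulr2n addr_eq0 -x_opp.
by rewrite mulf_eq0 (negbTE two) orbF.
Qed.

Section SignedClosure.

Context {T : eqType} (L : seq (T * T)).

Definition signed_nbrs (p : T * bool) : seq (T * bool) :=
  [seq (if e.1 == p.1 then e.2 else e.1, ~~ p.2)
  | e <- L & (e.1 == p.1) || (e.2 == p.1)].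

Definition signed_bfs_step (st : seq (T * bool) * seq (T * bool)) :=
  let new := undup [seq q <- flatten (map signed_nbrs st.2) | q \notin st.1] in
  (st.1 ++ new, new).

Definition signed_closure (n : nat) (x : T) : seq (T * bool) :=
  (iter n signed_bfs_step ([:: (x, false)], [:: (x, false)])).1.

Context {V : zmodType} (u : T -> V).
Hypothesis u_opp_on_L : forall e, e \in L -> u e.1 + u e.2 = 0.

Lemma signed_nbrs_opp p q : q \in signed_nbrs p -> u q.1 = - u p.1 /\ q.2 = ~~ p.2.
Proof.
case/mapP => e; rewrite mem_filter => /andP[e_at_p eL] -> /=; split=> //.
have /eqP := u_opp_on_L eL; rewrite addr_eq0.
by case: eqP e_at_p => [<- _ /eqP -> | _ /= /eqP <- /eqP]; rewrite ?opprK.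
Qed.

Lemma signed_closure_sound n x y b :
  (y, b) \in signed_closure n x -> u y = if b then - u x else u x.
Proof.
pose ok (p : T * bool) := u p.1 == if p.2 then - u x else u x.
pose ok_st (st : seq (T * bool) * seq (T * bool)) := all ok st.1 && all ok st.2.
have step st : ok_st st -> ok_st (signed_bfs_step st).
  case/andP=> ok_seen ok_front.
  have ok_new :
      all ok (undup [seq q <- flatten (map signed_nbrs st.2) | q \notin st.1]).
    apply/allP => q; rewrite mem_undup mem_filter => /andP[_].
    case/flattenP=> _ /mapP[p pR ->] q_nbr; rewrite /ok.
    have [-> ->] := signed_nbrs_opp q_nbr; have /eqP -> := allP ok_front p pR.
    by case: p.2; rewrite /= ?opprK.
  by rewrite /ok_st /= all_cat ok_seen ok_new.
have: ok_st (iter n signed_bfs_step ([:: (x, false)], [:: (x, false)])).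
  by elim: n => [|n IH]; [rewrite /ok_st /= /ok eqxx | exact: step].
by case/andP=> /allP ok_closure _ /ok_closure/eqP.
Qed.

End SignedClosure.

Lemma scUE (F : fieldType) (c : F) (u : UP F) (x : pvert) : scU c u x = c * u x.
Proof. exact: ffunE. Qed.

Lemma vtxE (F : fieldType) (x y : pvert) : vtx F x y = (y == x)%:R.
Proof. exact: ffunE. Qed.

Lemma bprod_eq0 (F : fieldType) (a b : pvert) (E : pedge) :
  (a \notin val E) || (b \notin val E) -> bprod F a b E = 0.
Proof.
move=> out; rewrite ffunE; case: eqP => [ab | _].
  by move: out; rewrite ab orbb => /negbTE ->.
case: eqP => // E_ab; by move: out; rewrite E_ab !inE !eqxx orbT.
Qed.

Lemma NPmul_sqr_edge (F : fieldType) (u : UP F) (E : pedge) (x y : pvert) :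
  x != y -> val E = [set x; y] -> NPmul u u E = (u x + u y) ^+ 2.
Proof.
move=> xy E_xy; have yx : y != x by rewrite eq_sym.
have sum_on_E (G : pvert -> F) :
    (forall a, a \notin val E -> G a = 0) -> \sum_a G a = G x + G y.
  move=> G0; rewrite (bigD1 x) // (bigD1 y) //= big1 ?addr0 // => a /andP[ax ay].
  by apply: G0; rewrite E_xy !inE negb_or ax ay.
rewrite ffunE sum_on_E => [|a aE]; last first.
  by rewrite big1 // => b _; rewrite bprod_eq0 ?aE ?mulr0.
rewrite !sum_on_E => [|b bE|b bE]; try by rewrite bprod_eq0 ?bE ?orbT ?mulr0.
rewrite !ffunE E_xy !eqxx (negbTE xy) (negbTE yx) !inE !eqxx orbT setUC eqxx /=.
ring.
Qed.

Definition in_pair (l : nat) (p : nat * nat) : bool := (l == p.1) || (l == p.2).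

Definition disjoint_pairs (p q : nat * nat) : bool :=
  ~~ in_pair p.1 q && ~~ in_pair p.2 q.

Lemma disjoint_pairs_in p q l :
  disjoint_pairs p q -> in_pair l p -> ~~ in_pair l q.
Proof. by case/andP=> p1q p2q /orP[] /eqP ->. Qed.

Definition pverts : seq (nat * nat) :=
  [seq (a, b) | a <- iota 0 5, b <- iota a.+1 (4 - a)].

Definition pedges : seq ((nat * nat) * (nat * nat)) :=
  [seq e <- [seq (p, q) | p <- pverts, q <- pverts]
  | (e.1.1 < e.2.1)%N && disjoint_pairs e.1 e.2].

Lemma mem_pverts p : (p \in pverts) = (p.1 < p.2 < 5)%N.
Proof.
case: p => a b; apply/allpairsPdep/idP => [[a' [b' []]] | ab5].
  by rewrite !mem_iota => a5 ab [-> ->] /=; lia.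
by exists a, b; rewrite !mem_iota; split=> //; move: ab5 => /=; lia.
Qed.

Lemma mem_pedges e :
  (e \in pedges) =
  [&& e.1 \in pverts, e.2 \in pverts, (e.1.1 < e.2.1)%N & disjoint_pairs e.1 e.2].
Proof.
have all_e : (e \in [seq (p, q) | p <- pverts, q <- pverts]) =
             (e.1 \in pverts) && (e.2 \in pverts).
  apply/allpairsP/andP => [[r [r1 r2 ->]] // | [e1 e2]].
  by exists e; split; last by case: e e1 e2.
by rewrite mem_filter all_e andbC -!andbA.
Qed.

Lemma pverts_bounded p : p \in pverts -> (p.1 < 5)%N /\ (p.2 < 5)%N.
Proof.
by rewrite mem_pverts => /andP[lt lt5]; split; first exact: ltn_trans lt lt5.
Qed.

Lemma pedge_ends e : e \in pedges -> e.1 \in pverts /\ e.2 \in pverts.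
Proof. by rewrite mem_pedges => /and4P[]. Qed.

Lemma pedge_ends_neq e : e \in pedges -> e.1 != e.2.
Proof.
rewrite mem_pedges => /and4P[_ _ lt _].
by apply: contraTneq lt => ->; rewrite ltnn.
Qed.

Fact card_set04 : #|[set (ord0 : 'I_5); ord_max]| == 2%N.
Proof. by rewrite cards2. Qed.

Definition pair_vert (a b : 'I_5) : pvert :=
  insubd (Sub [set ord0; ord_max] card_set04) [set a; b].

Definition vert (p : nat * nat) : pvert := pair_vert (inord p.1) (inord p.2).

Lemma val_pair_vert a b : a != b -> val (pair_vert a b) = [set a; b].
Proof. by move=> ab; rewrite insubdK // unfold_in cards2 ab. Qed.

Lemma val_vert p : p \in pverts -> val (vert p) = [set inord p.1; inord p.2].
Proof.
move=> pv; have [p1 p2] := pverts_bounded pv; move: pv; rewrite mem_pverts.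
move=> /andP[lt _]; rewrite val_pair_vert // -val_eqE /= !inordK //.
by rewrite neq_ltn lt.
Qed.

Lemma mem_val_vert (l : 'I_5) p : p \in pverts -> (l \in val (vert p)) = in_pair l p.
Proof.
move=> pv; have [p1 p2] := pverts_bounded pv.
by rewrite val_vert // !inE -!val_eqE /= !inordK.
Qed.

Fact pverts_separated :
  all (fun p => all (fun q =>
    all (fun l => in_pair l p == in_pair l q) (iota 0 5) ==> (p == q)) pverts) pverts.
Proof. by []. Qed.

Lemma vert_inj : {in pverts &, injective vert}.
Proof.
move=> p q pv qv pq; apply/eqP.
move/allP: pverts_separated => /(_ p pv)/allP/(_ q qv)/implyP; apply.
apply/allP => l; rewrite mem_iota => /andP[_ l5].
by rewrite -[l](@inordK 4) // -!mem_val_vert ?pq.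
Qed.

Lemma vert_surj (x : pvert) : exists2 p, p \in pverts & x = vert p.
Proof.
case: x => A A2; have /cards2P[a [b [ab def_A]]] := A2.
wlog lt_ab : a b ab def_A / (a < b)%N.
  move=> W; case: (ltngtP a b) => [|lt_ba|eq_ab]; first exact: W.
    by apply: (W b a) lt_ba; rewrite 1?eq_sym // def_A setUC.
  by move: ab; rewrite (ord_inj eq_ab) eqxx.
have pv : (nat_of_ord a, nat_of_ord b) \in pverts by rewrite mem_pverts /= lt_ab /=.
exists (nat_of_ord a, nat_of_ord b) => //.
by apply: val_inj; rewrite val_vert //= !inord_val.
Qed.

Lemma padj_vert p q :
  p \in pverts -> q \in pverts -> padj (vert p) (vert q) = disjoint_pairs p q.
Proof.
move=> pv qv; have [p1 p2] := pverts_bounded pv.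
by rewrite /padj {1}val_vert // disjoint_set2 !mem_val_vert // !inordK.
Qed.

Lemma is_pedge_vert e : e \in pedges -> is_pedge [set vert e.1; vert e.2].
Proof.
move=> ev; have [e1 e2] := pedge_ends ev.
apply/existsP; exists (vert e.1); apply/existsP; exists (vert e.2).
by rewrite eqxx padj_vert //; move: ev; rewrite mem_pedges => /and4P[].
Qed.

Definition pedge_of (e : (nat * nat) * (nat * nat)) : pedge :=
  insubd (Sub _ (@is_pedge_vert ((0, 1), (2, 3))%N isT)) [set vert e.1; vert e.2].

Lemma val_pedge_of e : e \in pedges -> val (pedge_of e) = [set vert e.1; vert e.2].
Proof. by move=> ev; rewrite insubdK //; apply: is_pedge_vert. Qed.

Fact pedges_separated :
  all (fun e => all (fun f =>
    all (fun p => ((p == e.1) || (p == e.2)) == ((p == f.1) || (p == f.2))) pverts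
    ==> (e == f)) pedges) pedges.
Proof. by []. Qed.

Lemma pedge_of_inj : {in pedges &, injective pedge_of}.
Proof.
move=> e f ev fv /(congr1 val); rewrite !val_pedge_of // => /setP ef; apply/eqP.
move/allP: pedges_separated => /(_ e ev)/allP/(_ f fv)/implyP; apply.
have [[e1 e2] [f1 f2]] := (pedge_ends ev, pedge_ends fv).
apply/allP => p pv; have := ef (vert p).
by rewrite !inE !(inj_in_eq vert_inj) // => ->.
Qed.

Lemma pedge_of_surj (E : pedge) : exists2 e, e \in pedges & E = pedge_of e.
Proof.
case: E => A A_edge; have /existsP[x /existsP[y /andP[/eqP def_A xy]]] := A_edge.
have [p pv def_x] := vert_surj x; have [q qv def_y] := vert_surj y.
rewrite {}def_x {}def_y padj_vert // in def_A xy.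
wlog lt_pq : p q pv qv def_A xy / (p.1 < q.1)%N.
  move=> W; case: (ltngtP p.1 q.1) => [|lt_qp|eq_pq]; first exact: W.
    apply: (W q p) => //; first by rewrite def_A setUC.
    by move: xy; rewrite -!padj_vert // /padj disjoint_sym.
  by move: xy; rewrite /disjoint_pairs /in_pair eq_pq eqxx.
have ev : (p, q) \in pedges by rewrite mem_pedges pv qv lt_pq xy.
by exists (p, q) => //; apply: val_inj; rewrite val_pedge_of.
Qed.

Lemma wt_NPmul_sqr (F : fieldType) (u : UP F) :
  wt (NPmul u u) = count (fun e => u (vert e.1) + u (vert e.2) != 0) pedges.
Proof.
rewrite /wt (card_set_count _ (isT : uniq pedges) pedge_of_inj pedge_of_surj).
apply: eq_in_count => e ev; have [e1 e2] := pedge_ends ev.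
rewrite (NPmul_sqr_edge u _ (val_pedge_of ev)) ?sqrf_eq0 //.
by rewrite (inj_in_eq vert_inj) // pedge_ends_neq.
Qed.

Definition good_edges (S : seq ((nat * nat) * (nat * nat))) :=
  [seq e <- pedges | e \notin S].

(* Twenty rounds of search exhaust the signed double cover of P, which has
   twenty vertices; soundness does not depend on this bound. *)
Definition reach_table S := [seq signed_closure (good_edges S) 20 x | x <- pverts].

Definition certifies_with (R : seq (seq ((nat * nat) * bool))) S : bool :=
  let reaches x y b := (y, b) \in nth [::] R (index x pverts) in
  let vanishes x := reaches x x true in
  [|| has (fun e => reaches e.1 e.2 true || vanishes e.1 && vanishes e.2) S,
      has (fun x => all (fun y => (y == x) || vanishes y) pverts) pverts
    | has (fun l => has (fun x =>
         all (fun y => reaches x y (in_pair l y)) pverts) pverts) (iota 0 5)].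

Definition certifies S := certifies_with (reach_table S) S.

Lemma certifies_all : all certifies (subseqs_of_size 3 pedges).
Proof. by vm_compute. Qed.

Section Certificate.

Variables (F : fieldType) (two_neq0 : 2%:R != 0 :> F) (u : UP F).

Let S := [seq e <- pedges | u (vert e.1) + u (vert e.2) != 0].

Lemma reach_table_sound x y b :
  x \in pverts -> (y, b) \in nth [::] (reach_table S) (index x pverts) ->
  u (vert y) = if b then - u (vert x) else u (vert x).
Proof.
move=> xv; rewrite (nth_map x) ?index_mem // nth_index //.
apply: (signed_closure_sound (u := fun p => u (vert p))) => e.
rewrite mem_filter => /andP[eS ev].
by move: eS; rewrite mem_filter ev andbT negbK => /eqP.
Qed.

Lemma certified_shape :
  certifies S ->
  (exists x c, u = scU c (vtx F x)) \/ (exists i c, u = scU c (u_el F i)).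
Proof.
have vanish x : x \in pverts ->
    (x, true) \in nth [::] (reach_table S) (index x pverts) -> u (vert x) = 0.
  by move=> xv /(reach_table_sound xv); apply: fixed_oppr_eq0.
case/or3P => [/hasP[e eS forced] | /hasP[x xv /allP vx] | ].
- move: eS; rewrite mem_filter => /andP[/eqP sum_neq0 ev]; exfalso; apply: sum_neq0.
  have [e1 e2] := pedge_ends ev; case/orP: forced => [/(reach_table_sound e1) -> |].
    by rewrite addrN.
  by case/andP=> /(vanish _ e1) -> /(vanish _ e2) ->; rewrite addr0.
- left; exists (vert x), (u (vert x)); apply/ffunP => y; have [q qv ->] := vert_surj y.
  rewrite scUE vtxE (inj_in_eq vert_inj) //; case: eqP => [-> | /eqP qx].
    by rewrite mulr1.
  by have := vx q qv; rewrite (negbTE qx) => /(vanish _ qv) ->; rewrite mulr0.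
- case/hasP=> l; rewrite mem_iota => /andP[_ l5] /hasP[x xv /allP rx].
  right; exists (inord l), (2%:R * u (vert x)); apply/ffunP => y.
  have [q qv ->] := vert_surj y.
  rewrite !ffunE mem_val_vert // inordK // (reach_table_sound xv (rx q qv)).
  by case: in_pair; field.
Qed.

End Certificate.

Lemma weight3_shape (F : fieldType) (u : UP F) :
  2%:R != 0 :> F -> wt (NPmul u u) = 3%N ->
  (exists x c, u = scU c (vtx F x)) \/ (exists i c, u = scU c (u_el F i)).
Proof.
move=> two_neq0 wt3; apply: certified_shape => //.
apply: (allP certifies_all); apply: mem_subseqs_of_size; first exact: filter_subseq.
by rewrite size_filter -wt_NPmul_sqr.
Qed.

Fact pverts_degree3 :
  all (fun p => count (fun e => (e.1 == p) || (e.2 == p)) pedges == 3%N) pverts.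
Proof. by []. Qed.

Fact avoiding_edges3 :
  all (fun l => count (fun e => ~~ in_pair l e.1 && ~~ in_pair l e.2) pedges == 3%N)
    (iota 0 5).
Proof. by []. Qed.

Lemma wt_sqr_vtx (F : fieldType) (c : F) (x : pvert) :
  c != 0 -> wt (NPmul (scU c (vtx F x)) (scU c (vtx F x))) = 3%N.
Proof.
move=> c0; have [p pv ->] := vert_surj x.
rewrite wt_NPmul_sqr -(eqP (allP pverts_degree3 p pv)).
apply: eq_in_count => e ev; have [e1 e2] := pedge_ends ev.
rewrite !scUE !vtxE !(inj_in_eq vert_inj) //; have e12 := pedge_ends_neq ev.
case: (e.1 =P p) => [e1p|_]; case: (e.2 =P p) => [e2p|_] /=.
- by rewrite e1p e2p eqxx in e12.
all: by rewrite ?mulr1n ?mulr0n ?mulr1 ?mulr0 ?addr0 ?add0r ?c0 ?eqxx.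
Qed.

Lemma wt_sqr_u_el (F : fieldType) (c : F) (i : 'I_5) :
  2%:R != 0 :> F -> c != 0 -> wt (NPmul (scU c (u_el F i)) (scU c (u_el F i))) = 3%N.
Proof.
move=> two_neq0 c0.
rewrite wt_NPmul_sqr -(eqP (allP avoiding_edges3 i _)); last first.
  by rewrite mem_iota add0n ltn_ord.
apply: eq_in_count => e ev; have [e1 e2] := pedge_ends ev.
have disj : disjoint_pairs e.1 e.2 by move: ev; rewrite mem_pedges => /and4P[].
rewrite !ffunE !mem_val_vert //.
case ie1: (in_pair i e.1).
  by rewrite (negbTE (disjoint_pairs_in disj ie1)) mulrN addNr eqxx.
case: (in_pair i e.2); first by rewrite mulrN addrN eqxx.
by rewrite (_ : c / 2%:R + c / 2%:R = c) ?c0 //; field.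
Qed.

Lemma vtx_scU_inj (F : fieldType) (x y : pvert) (c : F) :
  vtx F x = scU c (vtx F y) -> x = y.
Proof.
move/ffunP/(_ x); rewrite scUE !vtxE eqxx; case: eqP => // _.
by rewrite mulr0 => /eqP; rewrite oner_eq0.
Qed.

Lemma u_el_neq0 (F : fieldType) (i : 'I_5) (x : pvert) :
  2%:R != 0 :> F -> u_el F i x != 0.
Proof. by move=> two_neq0; rewrite ffunE; case: ifP; rewrite ?oppr_eq0 invr_eq0. Qed.

Lemma u_el_scU_inj (F : fieldType) (i j : 'I_5) (c : F) :
  2%:R != 0 :> F -> u_el F i = scU c (u_el F j) -> i = j.
Proof.
move=> two_neq0 /ffunP ij_prop; apply/eqP; apply: contraT => ij.
have : (0 < #|~: [set i; j]|)%N.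
  by rewrite -(leq_add2l #|[set i; j]|) cardsC cards2 ij card_ord.
case/card_gt0P => k; rewrite !inE negb_or => /andP[ki kj].
have ik : i != k by rewrite eq_sym.
have := ij_prop (pair_vert i j); have := ij_prop (pair_vert i k).
rewrite !ffunE !val_pair_vert // !inE !eqxx /= (eq_sym j i) (negbTE ij).
rewrite (eq_sym j k) (negbTE kj) /= mulrN => half_c /oppr_inj c_half.
have : (2%:R : F)^-1 = 0 by apply: fixed_oppr_eq0 => //; rewrite half_c -c_half.
by move/eqP; rewrite invr_eq0 (negbTE two_neq0).
Qed.

Lemma other_pvert (x : pvert) : exists y, y != x.
Proof.
have v01 : (0, 1)%N \in pverts by [].
have v02 : (0, 2)%N \in pverts by [].
case: (x =P vert (0, 1)%N) => [-> | /eqP x01].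
  by exists (vert (0, 2)%N); rewrite (inj_in_eq vert_inj).
by exists (vert (0, 1)%N); rewrite eq_sym.
Qed.

Lemma vtx_neq_scU_u_el (F : fieldType) (x : pvert) (i : 'I_5) (c : F) :
  2%:R != 0 :> F -> vtx F x != scU c (u_el F i).
Proof.
move=> two_neq0; apply/eqP => /ffunP vx_u; have [y yx] := other_pvert x.
have := vx_u y; rewrite scUE vtxE (negbTE yx) => /esym/eqP.
rewrite mulf_eq0 (negbTE (u_el_neq0 i y two_neq0)) orbF => /eqP c0.
by have := vx_u x; rewrite scUE vtxE eqxx c0 mul0r => /eqP; rewrite oner_eq0.
Qed.

Lemma u_el_neq_scU_vtx (F : fieldType) (x : pvert) (i : 'I_5) (c : F) :
  2%:R != 0 :> F -> u_el F i != scU c (vtx F x).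
Proof.
move=> two_neq0; apply/eqP => /ffunP u_vx; have [y yx] := other_pvert x.
by have := u_vx y; rewrite scUE vtxE (negbTE yx) mulr0; apply/eqP/u_el_neq0.
Qed.

Lemma actU_u_el (F : fieldType) (s : {perm 'I_5}) (i : 'I_5) :
  actU s (u_el F i) = u_el F (s i).
Proof.
apply/ffunP => A; rewrite !ffunE.
have -> : val (permv s^-1 A) = (s^-1)%g @: val A.
  by rewrite /permv insubdK // unfold_in card_imset ?(valP A) //; apply: perm_inj.
by rewrite -{1}(permK s i) mem_imset //; apply: perm_inj.
Qed.

Theorem lemma10p1 (F : fieldType) (char2 : (2%:R : F) != 0) :
  (* a nonzero u in U_P has wt(u^2) = 3 iff <u> is the span of a vertex or of some u_i *)
  (forall u : UP F, u != 0 ->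
     (wt (NPmul u u) = 3%N <->
        (exists x : pvert, exists c : F, u = scU c (vtx F x)) \/
        (exists i : 'I_5, exists c : F, u = scU c (u_el F i))))
  (* these fifteen spans are pairwise distinct *)
  /\ (forall x y : pvert, forall c : F, vtx F x = scU c (vtx F y) -> x = y)
  /\ (forall i j : 'I_5, forall c : F, u_el F i = scU c (u_el F j) -> i = j)
  /\ (forall (x : pvert) (i : 'I_5) (c : F), vtx F x != scU c (u_el F i))
  /\ (forall (x : pvert) (i : 'I_5) (c : F), u_el F i != scU c (vtx F x))
  (* the five u_i form an orbit of Sym(5) *)
  /\ (forall (s : {perm 'I_5}) (i : 'I_5), exists j : 'I_5, actU s (u_el F i) = u_el F j)
  /\ (forall i j : 'I_5, exists s : {perm 'I_5}, actU s (u_el F i) = u_el F j).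
Proof.
have scale_neq0 (v : UP F) (c : F) : scU c v != 0 -> c != 0.
  by apply: contraNneq => ->; apply/eqP/ffunP => y; rewrite scUE mul0r ffunE.
split.
  move=> u u0; split; first exact: weight3_shape.
  case=> [[x [c def_u]] | [i [c def_u]]]; rewrite def_u in u0 *.
    exact/wt_sqr_vtx/(scale_neq0 _ _ u0).
  exact/wt_sqr_u_el/(scale_neq0 _ _ u0).
split; first exact: vtx_scU_inj.
split; first by move=> i j c; apply: u_el_scU_inj.
split; first by move=> x i c; apply: vtx_neq_scU_u_el.
split; first by move=> x i c; apply: u_el_neq_scU_vtx.
split; first by move=> s i; exists (s i); rewrite actU_u_el.
by move=> i j; exists (tperm i j); rewrite actU_u_el tpermL.
Qed.
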